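(* Let $\phi\in\mathrm{Homeo}(\overline{\mathbb D}^2,\partial\overline{\mathbb D}^2)$ preserve the coherent probability measures $\lambda_1,\dots,\lambda_n$ on $\overline{\mathbb D}^2$. Then the map $(\overline{\mathbb D}^2)^n\to\mathcal F_n$, $P_n\mapsto\beta(P_n;\phi)$ (defined on the set where $\beta(P_n;\phi)$ is defined), is measurable with respect to the product measure $\lambda_1\times\cdots\times\lambda_n$.
   Context: $\overline{\mathbb D}^2$ is the closed unit disk in $\mathbb R^2$, $\mathbb D^2$ its interior. Fix $n\ge1$ and distinct points $q_1,\dots,q_n\in\mathbb D^2$ equally spaced, in this order, on a diameter. The Artin braid group $B_n$ has generators $\sigma_1,\dots,\sigma_{n-1}$ with relations $\sigma_i\sigma_j=\sigma_j\sigma_i$ ($|i-j|\ge2$) and $\sigma_i\sigma_{i+1}\sigma_i=\sigma_{i+1}\sigma_i\sigma_{i+1}$; geometrically, $B_n$ is the set of equivalence classes (under continuous deformation through such objects) of geometrical braids, i.e. unions of $n$ arcs $\{(\gamma_i(t),t):t\in[0,1]\}\subset\mathbb D^2\times[0,1]$ with $\gamma_i(t)\ne\gamma_j(t)$ for $i\ne j$, joining $\{q_1,\dots,q_n\}\times\{0\}$ to $\{q_1,\dots,q_n\}\times\{1\}$, with product given by concatenation (the first factor below the second). The pure braid group $\mathcal F_n$ consists of classes with $\gamma_i(0)=\gamma_i(1)$ for all $i$. $\mathrm{Homeo}(\overline{\mathbb D}^2,\partial\overline{\mathbb D}^2)$ is the group of homeomorphisms of $\overline{\mathbb D}^2$ equal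 to the identity near the boundary. $\Omega^{2n}$ is the set of $(p_1,\dots,p_n)\in(\overline{\mathbb D}^2)^n$ such that for all $i\ne j$ and all $s\in[0,1]$, $(1-s)q_i+sp_i\ne(1-s)q_j+sp_j$. For $\phi\in\mathrm{Homeo}(\overline{\mathbb D}^2,\partial\overline{\mathbb D}^2)$ and $P_n=(p_1,\dots,p_n)$ with pairwise distinct $p_i\in\mathbb D^2$ such that both $P_n$ and $(\phi(p_1),\dots,\phi(p_n))$ lie in $\Omega^{2n}$, the braid $\beta(P_n;\phi)\in\mathcal F_n$ is defined (''$\beta(P_n;\phi)$ is defined'') as the class of the geometrical braid whose $i$-th strand is: the segment from $(q_i,0)$ to $(p_i,1/3)$, then the arc $(\phi_{3t-1}(p_i),t)$, $t\in[1/3,2/3]$, where $(\phi_\tau)_{\tau\in[0,1]}$ is any isotopy in $\mathrm{Homeo}(\overline{\mathbb D}^2,\partial\overline{\mathbb D}^2)$ from the identity to $\phi$, then the segment from $(\phi(p_i),2/3)$ to $(q_i,1)$; this class does not depend on the isotopy. An $n$-tuple $\lambda_1,\dots,\lambda_n$ of probability measures on $\overline{\mathbb D}^2$ is coherent if $\Omega^{2n}$ has full measure for $\lambda_1\times\cdots\times\lambda_n$. *)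

From HB Require Import structures.
From mathcomp Require Import all_boot all_order all_algebra.
From mathcomp Require Import all_classical all_reals all_analysis.
Set Implicit Arguments. Unset Strict Implicit. Unset Printing Implicit Defensive.
Import Order.TTheory GRing.Theory Num.Theory numFieldNormedType.Exports.
Local Open Scope classical_set_scope.
Local Open Scope ring_scope.

Notation pt R := (R * R)%type (only parsing).

Section BraidDefs.
Variable R : realType.

Definition sqn (x : (pt R)) : R := x.1 ^+ 2 + x.2 ^+ 2.
Definition cdisk : set (pt R) := [set x | sqn x <= 1].
Definition odisk : set (pt R) := [set x | sqn x < 1].
Definition I01 : set R := [set t | 0 <= t <= 1].

Definition lerp (s : R) (a b : (pt R)) : (pt R) :=
  ((1 - s) * a.1 + s * b.1, (1 - s) * a.2 + s * b.2).

(* q_1,...,q_n : equally spaced, in this order, on the horizontal diameter;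
   q_(i+1) = (2(i+1)/(n+1) - 1, 0) for i : 'I_n *)
Definition qpt (n : nat) (i : 'I_n) : (pt R) :=
  (2 * (i.+1)%:R / (n.+1)%:R - 1, 0).

(* Homeo(D^2, dD^2): a homeomorphism of the closed disk equal to the identity
   near the boundary, represented by its (unique) extension by the identity
   to the whole plane. *)
Definition homeoD (f : (pt R) -> (pt R)) : Prop :=
  [/\ continuous f,
      (exists g : (pt R) -> (pt R), [/\ continuous g, cancel f g & cancel g f]) &
      (exists r : R, 0 <= r < 1 /\ forall x, r < sqn x -> f x = x)].

Definition isotopy (Phi : R -> (pt R) -> (pt R)) (f : (pt R) -> (pt R)) : Prop :=
  [/\ (forall tau, I01 tau -> homeoD (Phi tau)),
      (forall x, Phi 0 x = x),
      (forall x, Phi 1 x = f x) &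
      {within [set tx : R * (pt R) | I01 tx.1 /\ cdisk tx.2],
         continuous (fun tx : R * (pt R) => Phi tx.1 tx.2)}].

(* geometric braids, strand i being t |-> (gamma i t, t), labelled so that
   strand i starts at q_i *)
Definition braidT (n : nat) := 'I_n -> R -> (pt R).

Definition geom_braid (n : nat) (g : braidT n) : Prop :=
  [/\ (forall i, {within I01, continuous (g i)}),
      (forall i t, I01 t -> odisk (g i t)),
      (forall i j t, I01 t -> i <> j -> g i t <> g j t),
      (forall i, g i 0 = qpt i) &
      (forall i, exists j : 'I_n, g i 1 = qpt j)].

Definition braid_equiv (n : nat) (g h : braidT n) : Prop :=
  exists H : R -> braidT n,
    [/\ (forall s, I01 s -> geom_braid (H s)),
        (forall i t, I01 t -> H 0 i t = g i t),
        (forall i t, I01 t -> H 1 i t = h i t) &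
        (forall i, {within [set st : R * R | I01 st.1 /\ I01 st.2],
                      continuous (fun st : R * R => H st.1 i st.2)})].

Definition beta_strand (n : nat) (P : 'I_n -> (pt R)) (f : (pt R) -> (pt R))
    (Phi : R -> (pt R) -> (pt R)) : braidT n :=
  fun i t =>
    if t <= 1 / 3 then lerp (3 * t) (qpt i) (P i)
    else if t <= 2 / 3 then Phi (3 * t - 1) (P i)
    else lerp (3 * t - 2) (f (P i)) (qpt i).

Definition in_beta (n : nat) (P : 'I_n -> (pt R)) (f : (pt R) -> (pt R)) (b : braidT n) :=
  exists Phi, isotopy Phi f /\ braid_equiv (beta_strand P f Phi) b.

Definition Omega (n : nat) : set ('I_n -> (pt R)) :=
  [set P | (forall i, cdisk (P i)) /\
     forall i j s, i <> j -> I01 s ->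
       lerp s (qpt i) (P i) <> lerp s (qpt j) (P j)].

Definition beta_dom (n : nat) (f : (pt R) -> (pt R)) : set ('I_n -> (pt R)) :=
  [set P | [/\ (forall i, odisk (P i)),
              (forall i j, i <> j -> P i <> P j),
              Omega P & Omega (f \o P)]].

(* product sigma-algebra on (R^2)^n, generated by measurable boxes *)
Definition boxes (n : nat) : set (set ('I_n -> (pt R))) :=
  [set B | exists A : 'I_n -> set (pt R),
     (forall i, measurable (A i)) /\ B = [set P | forall i, A i (P i)]].


Local Notation ptsn n := (g_sigma_algebraType (@boxes n)).

Definition is_prod_measure (n : nat) (lam : 'I_n -> probability (pt R) R)
    (mu : {measure set (ptsn n) -> \bar R}) : Prop :=
  forall A : 'I_n -> set (pt R), (forall i, measurable (A i)) ->
    mu [set P | forall i, A i (P i)] = (\prod_(i < n) lam i (A i))%E.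

Definition coherent (n : nat) (mu : {measure set (ptsn n) -> \bar R}) : Prop :=
  mu.-negligible (~` (@Omega n : set (ptsn n))).

(* measurability with respect to the (completion of the) measure mu *)
Definition cmeasurable (d : measure_display) (T : measurableType d)
    (mu : set T -> \bar R) (A : set T) : Prop :=
  exists B, measurable B /\ mu.-negligible ((A `\` B) `|` (B `\` A)).

End BraidDefs.

Notation ptsn R n := (g_sigma_algebraType (@boxes R n)).

From HB Require Import structures.
From mathcomp Require Import all_boot all_order all_algebra.
From mathcomp Require Import all_classical all_reals all_analysis.
From mathcomp Require Import measurable_realfun ring lra.
Import Order.TTheory GRing.Theory Num.Theory numFieldNormedType.Exports.
Set Implicit Arguments. Unset Strict Implicit. Unset Printing Implicit Defensive.
Local Open Scope classical_set_scope.
Local Open Scope ring_scope.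

(* The set of configurations P at which beta(P; phi) is defined and lies in a
   given set S of braids is open in (R^2)^n. The conditions defining the domain
   of beta are open (the disjointness of the straight segments from the q_i by
   compactness of [0, 1]), so for P' close to P the segment from P' to P stays
   in the domain; sliding the configuration along it deforms the concatenated
   strands continuously, whence beta(P'; phi) = beta(P; phi). An open set is a
   countable union of rational boxes. *)

Section WithinContinuity.
Context {T U V : topologicalType}.

Lemma within_continuous_comp (A : set T) (B : set U) (u : T -> U) (F : U -> V) :
  {within A, continuous u} -> (forall x, A x -> B (u x)) ->
  {within B, continuous F} -> {within A, continuous (F \o u)}.
Proof.
move=> /subspace_continuousP cu AB /subspace_continuousP cF.
apply/subspace_continuousP => x Ax.
apply: cvg_comp (cF _ (AB x Ax)) => W /= /(cu x Ax).
rewrite !nbhs_simpl /within /=.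
by apply: filterS => z BW Az; apply: BW => //; apply: AB.
Qed.

Lemma within_continuous_if {R : realType} (A : set T) (key : T -> R) (c : R)
    (f g : T -> U) :
  closed A -> continuous key ->
  {within A `&` [set x | key x <= c], continuous f} ->
  {within A `&` [set x | c <= key x], continuous g} ->
  (forall x, A x -> key x = c -> f x = g x) ->
  {within A, continuous (fun x => if key x <= c then f x else g x)}.
Proof.
move=> cA ck cf cg fg.
have -> : A = (A `&` [set x | key x <= c]) `|` (A `&` [set x | c <= key x]).
  rewrite -setIUr; apply/esym/setIidl => x _ /=.
  by case: (lerP (key x) c) => [|/ltW] kc; [left | right].
apply: withinU_continuous.
- apply: closedI => //; apply: (@closed_comp _ _ key [set y | y <= c]).
    by move=> x _; exact: ck.
  exact: closed_le.
- apply: closedI => //; apply: (@closed_comp _ _ key [set y | c <= y]).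
    by move=> x _; exact: ck.
  exact: closed_ge.
- by apply: subspace_eq_continuous cf => x /set_mem[_ kc]; rewrite /from_subspace kc.
- apply: subspace_eq_continuous cg => x /set_mem[Ax]; rewrite /from_subspace /=.
  rewrite le_eqVlt => /orP[/eqP xc|cx]; last by rewrite leNgt cx.
  by rewrite -xc lexx fg.
Qed.

End WithinContinuity.

Section Segments.
Variable R : realType.
Implicit Types (s : R) (a b c e x y : pt R).

Lemma lerpE s a b : lerp s a b = (1 - s) *: a + s *: b.
Proof. by []. Qed.

Lemma lerp0 a b : lerp 0 a b = a.
Proof. by rewrite lerpE subr0 scale1r scale0r addr0. Qed.

Lemma lerp1 a b : lerp 1 a b = b.
Proof. by rewrite lerpE subrr scale0r scale1r add0r. Qed.

Lemma lerpC s a b : lerp s a b = lerp (1 - s) b a.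
Proof. by rewrite !lerpE subKr addrC. Qed.

Lemma lerpBr s a b c : lerp s a b - lerp s a c = s *: (b - c).
Proof. by rewrite !lerpE opprD addrACA subrr add0r scalerBr. Qed.

Lemma continuous_lerp (X : topologicalType) (u : X -> R) (v w : X -> pt R) :
  continuous u -> continuous v -> continuous w ->
  continuous (fun z => lerp (u z) (v z) (w z)).
Proof.
move=> cu cv cw.
suff : continuous (fun z => (1 - u z) *: v z + u z *: w z) by [].
move=> z; apply: cvgD; apply: cvgZ; [| exact: cv | exact: cu | exact: cw].
by apply: cvgB; [exact: cvg_cst | exact: cu].
Qed.

Lemma ball_lerp x y d s : I01 s -> ball x d y -> ball x d (lerp s y x).
Proof.
move=> /andP[s0 s1]; rewrite -!ball_normE /=.
have -> : x - lerp s y x = (1 - s) *: (x - y).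
  by rewrite lerpE opprD addrA addrAC -{1}[x]scale1r -scalerBl -scalerBr.
rewrite normrZ ger0_norm ?subr_ge0 //; apply: le_lt_trans.
by rewrite ler_piMl ?normr_ge0 // lerBlDr lerDl.
Qed.

Lemma segments_min_dist a b c e :
  (forall s, I01 s -> lerp s a b <> lerp s c e) ->
  exists2 m, 0 < m & forall s, I01 s -> m <= `|lerp s a b - lerp s c e|.
Proof.
move=> apart; pose g s := `|lerp s a b - lerp s c e|.
have cseg u v : continuous (fun s => lerp s u v).
  by apply: continuous_lerp => [s|s|s]; [exact: cvg_id | exact: cvg_cst | exact: cvg_cst].
have cg : continuous g.
  by move=> s; apply: cvg_norm; apply: cvgB; [exact: cseg | exact: cseg].
have [s0 s0I gmin] := @EVT_min R g 0 1 ler01 (continuous_subspaceT cg).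
exists (g s0) => [|s Is]; last by apply: gmin; rewrite in_itv.
by rewrite normr_gt0 subr_eq0; apply/eqP/apart; move: s0I; rewrite in_itv.
Qed.

Lemma segments_apart_near a b c e :
  (forall s, I01 s -> lerp s a b <> lerp s c e) ->
  \forall d \near 0^'+, forall b' e', ball b d b' -> ball e d e' ->
    forall s, I01 s -> lerp s a b' <> lerp s c e'.
Proof.
move=> /segments_min_dist[m m0 gap].
near=> d => b' e' + + s Is same; rewrite -!ball_normE /= => bb ee.
have : `|lerp s a b - lerp s c e| <= `|b - b'| + `|e - e'|.
  have -> : lerp s a b - lerp s c e =
      (lerp s a b - lerp s a b') - (lerp s c e - lerp s c e').
    by rewrite same opprB addrA subrK.
  rewrite !lerpBr -scalerBr normrZ.
  move: Is => /andP[s0 s1]; rewrite ger0_norm //.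
  apply: le_trans (ler_normB _ _); rewrite ler_piMl ?normr_ge0 //.
have : d <= m / 2 by near: d; apply: nbhs_right_le; rewrite divr_gt0.
have := gap s Is; lra.
Unshelve. all: by end_near.
Qed.

End Segments.

Section Disk.
Variable R : realType.
Implicit Types (s : R) (a b : pt R).

Lemma continuous_sqn : continuous (@sqn R).
Proof.
have -> : @sqn R = fun x => x.1 * x.1 + x.2 * x.2.
  by apply/funext => x; rewrite /sqn !expr2.
by move=> x; apply: cvgD; apply: cvgM; solve [exact: cvg_fst | exact: cvg_snd].
Qed.

Lemma open_odisk : open (@odisk R).
Proof.
apply: (@open_comp _ _ (@sqn R) [set r | r < 1]); last exact: open_lt.
by move=> x _; exact: continuous_sqn.
Qed.

Lemma odisk_cdisk a : odisk a -> cdisk a.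
Proof. exact: ltW. Qed.

Lemma sqn_lerp_le s a b : 0 <= s <= 1 ->
  sqn (lerp s a b) <= (1 - s) * sqn a + s * sqn b.
Proof.
move=> /andP[s0 s1]; rewrite -subr_ge0.
have -> : (1 - s) * sqn a + s * sqn b - sqn (lerp s a b) =
    s * (1 - s) * ((a.1 - b.1) ^+ 2 + (a.2 - b.2) ^+ 2).
  by rewrite /sqn /=; ring.
by apply: mulr_ge0; [apply: mulr_ge0; lra | apply: addr_ge0; exact: sqr_ge0].
Qed.

Lemma odisk_lerp s a b : 0 <= s <= 1 -> odisk a -> odisk b -> odisk (lerp s a b).
Proof.
move=> s01 oa ob; apply: le_lt_trans (sqn_lerp_le a b s01) _.
move: s01 oa ob => /andP[s0 s1]; rewrite /odisk /=.
by have [s_small|s_large] := lerP s (1 / 2); nra.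
Qed.

Lemma odisk_qpt n (i : 'I_n) : odisk (qpt R i).
Proof.
rewrite /odisk /sqn /= expr0n addr0 -mulrA.
set x : R := (i.+1)%:R / (n.+1)%:R.
have x0 : 0 < x by rewrite divr_gt0 ?ltr0n.
have x1 : x < 1 by rewrite ltr_pdivrMr ?ltr0n // mul1r ltr_nat ltnS.
nra.
Qed.

Lemma homeoD_inj (f : pt R -> pt R) : homeoD f -> injective f.
Proof. by case=> _ [g [_ fK _]] _; exact: can_inj fK. Qed.

(* Points outside the open disk are fixed, so by injectivity they are the only
   points mapped outside it. *)
Lemma homeoD_odisk (f : pt R -> pt R) a : homeoD f -> odisk a -> odisk (f a).
Proof.
move=> hf oa; have finj := homeoD_inj hf; case: hf => _ _ [r [/andP[r0 r1] fid]].
rewrite /odisk /=; apply/negPn/negP; rewrite -leNgt => fa1.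
have ffa : f (f a) = f a by apply: fid; lra.
by move: oa; rewrite /odisk /= -(finj _ _ ffa); lra.
Qed.

End Disk.

Section Configurations.
Variable R : realType.

Lemma near_radius_pos (Q : R -> Prop) :
  (\forall d \near 0^'+, Q d) -> exists2 d, 0 < d & Q d.
Proof.
move=> Qnear; near (0 : R)^'+ => d.
exists d; near: d; [exact: nbhs_right_gt | exact: Qnear].
Unshelve. all: by end_near.
Qed.

Lemma nbhs_ball_radius (M : pseudoMetricType R) (x : M) (A : set M) :
  nbhs x A -> \forall d \near 0^'+, ball x d `<=` A.
Proof.
move=> /nbhs_ballP[e e0 eA]; near=> d; apply: subset_trans eA; apply: le_ball.
by near: d; exact: nbhs_right_le.
Unshelve. all: by end_near.
Qed.

Variable n : nat.
Implicit Types (P q : 'I_n -> pt R) (F G : set ('I_n -> pt R)).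

Definition config_ball P (d : R) : set ('I_n -> pt R) :=
  [set P' | forall i, ball (P i) d (P' i)].

Definition config_open F :=
  forall P, F P -> \forall d \near 0^'+, config_ball P d `<=` F.

Lemma config_openI F G : config_open F -> config_open G -> config_open (F `&` G).
Proof.
move=> oF oG P [FP GP].
by apply: filterS2 (oF P FP) (oG P GP) => d sF sG P' PP'; split; [exact: sF | exact: sG].
Qed.

Lemma config_open_pointwise (A : set (pt R)) :
  open A -> config_open [set P : 'I_n -> pt R | forall i, A (P i)].
Proof.
move=> oA P AP; have /filter_forall : forall i,
    \forall d \near 0^'+, ball (P i) d `<=` A.
  by move=> i; apply: nbhs_ball_radius; exact: open_nbhs_nbhs.
by apply: filterS => d sub P' PP' i; exact: sub.
Qed.

Lemma config_open_comp (f : pt R -> pt R) F :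
  continuous f -> config_open F -> config_open [set P : 'I_n -> pt R | F (f \o P)].
Proof.
move=> cf oF P FfP; have [e e0 sub] := near_radius_pos (oF _ FfP).
have /filter_forall : forall i,
    \forall d \near 0^'+, ball (P i) d `<=` f @^-1` ball (f (P i)) e.
  by move=> i; apply: nbhs_ball_radius; apply: cf; exact: nbhsx_ballx.
by apply: filterS => d near_f P' PP'; apply: sub => i; exact: near_f.
Qed.

Definition segments_disjoint q P :=
  forall i j s, i <> j -> I01 s -> lerp s (q i) (P i) <> lerp s (q j) (P j).

Lemma segments_disjoint_open q : config_open (segments_disjoint q).
Proof.
move=> P disjP; have /filter_forall : forall ij : 'I_n * 'I_n,
    \forall d \near 0^'+, forall P', config_ball P d P' -> ij.1 <> ij.2 ->
      forall s, I01 s -> lerp s (q ij.1) (P' ij.1) <> lerp s (q ij.2) (P' ij.2).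
  move=> [i j] /=; have [<-|ij] := eqVneq i j.
    by apply: nearW => d P' _ [].
  have {}ij : i <> j by apply/eqP.
  apply: filterS (segments_apart_near (fun s => disjP i j s ij)) => d apart P' PP' _.
  exact: apart (PP' i) (PP' j).
by apply: filterS => d sep P' PP' i j s ij; exact: (sep (i, j)).
Qed.

End Configurations.

Section BetaDomain.
Variables (R : realType) (n : nat) (f : pt R -> pt R).
Hypothesis hf : homeoD f.

Lemma beta_domE :
  beta_dom f = [set P : 'I_n -> pt R | forall i, odisk (P i)] `&`
    segments_disjoint (@qpt R n) `&`
    [set P : 'I_n -> pt R | segments_disjoint (@qpt R n) (f \o P)].
Proof.
apply/seteqP; split => P; first by case=> oP _ [_ disjP] [_ disjfP].
move=> [[oP disjP] disjfP]; split => //.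
- move=> i j ij PiPj; apply: (disjP i j 1 ij); first by rewrite /I01 /= ler01 lexx.
  by rewrite !lerp1.
- by split => // i; exact: odisk_cdisk.
- by split => // i; apply/odisk_cdisk/homeoD_odisk.
Qed.

Lemma beta_dom_open : config_open (@beta_dom R n f).
Proof.
rewrite beta_domE; apply: config_openI; first apply: config_openI.
- exact/config_open_pointwise/open_odisk.
- exact: segments_disjoint_open.
- by apply: config_open_comp; [case: hf | exact: segments_disjoint_open].
Qed.

End BetaDomain.

Section Strands.
Variable R : realType.

Definition unit_square : set (R * R) := [set st | I01 st.1 /\ I01 st.2].

Lemma closed_I01 : closed (@I01 R).
Proof.
have -> : @I01 R = [set t | 0 <= t] `&` [set t | t <= 1].
  by apply/seteqP; split => t; rewrite /I01 /=; [case/andP | case=> -> ->].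
by apply: closedI; [exact: closed_ge | exact: closed_le].
Qed.

Lemma closed_unit_square : closed unit_square.
Proof.
apply: closedI.
- by apply: (@closed_comp _ _ fst); [move=> x _; exact: cvg_fst | exact: closed_I01].
- by apply: (@closed_comp _ _ snd); [move=> x _; exact: cvg_snd | exact: closed_I01].
Qed.

Lemma closed_snd_ge (c : R) : closed [set st : R * R | c <= st.2].
Proof.
apply: (@closed_comp _ _ snd [set t | c <= t]); last exact: closed_ge.
by move=> x _; exact: cvg_snd.
Qed.

Lemma braid_equiv_trans n (g h k : braidT R n) :
  braid_equiv g h -> braid_equiv h k -> braid_equiv g k.
Proof.
move=> [H [Hgb H0 H1 cH]] [K [Kgb K0 K1 cK]].
exists (fun s i t => if s <= 1 / 2 then H (2 * s) i t else K (2 * s - 1) i t); split.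
- move=> s /andP[s0 s1]; have [s12|s12] := lerP s (1 / 2).
    by apply: Hgb; apply/andP; split; lra.
  by apply: Kgb; apply/andP; split; lra.
- by move=> i t It; rewrite ifT ?mulr0 ?H0 //; lra.
- move=> i t It; rewrite ifF; last by apply/negbTE; rewrite -ltNge; lra.
  have -> : 2 * 1 - 1 = 1 :> R by lra.
  exact: K1.
- move=> i; apply: (within_continuous_if (key := fst) (c := 1 / 2)).
  + exact: closed_unit_square.
  + by move=> st; exact: cvg_fst.
  + apply: (within_continuous_comp
      (u := fun st : R * R => (2 * st.1, st.2)) _ _ (cH i)).
      apply: continuous_subspaceT => st.
      exact: cvg_pair (cvgM (cvg_cst _) cvg_fst) cvg_snd.
    by move=> st [[/andP[s0 s1] It] /= s12]; split => //; apply/andP; split; lra.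
  + apply: (within_continuous_comp
      (u := fun st : R * R => (2 * st.1 - 1, st.2)) _ _ (cK i)).
      apply: continuous_subspaceT => st.
      exact: cvg_pair (cvgB (cvgM (cvg_cst _) cvg_fst) (cvg_cst _)) cvg_snd.
    by move=> st [[/andP[s0 s1] It] /= s12]; split => //; apply/andP; split; lra.
  + move=> st [_ It] /= ->.
    have -> : 2 * (1 / 2) - 1 = 0 :> R by lra.
    have -> : 2 * (1 / 2) = 1 :> R by lra.
    by rewrite H1 // K0.
Qed.

Variables (n : nat) (f : pt R -> pt R) (Phi : R -> pt R -> pt R).
Hypotheses (hf : homeoD f) (iso : isotopy Phi f).

Lemma beta_strand_family_continuous (Ps : R -> 'I_n -> pt R) i :
  continuous (fun s => Ps s i) -> (forall s, I01 s -> cdisk (Ps s i)) ->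
  {within unit_square, continuous (fun st : R * R => beta_strand (Ps st.1) f Phi i st.2)}.
Proof.
move=> cP diskP; have [_ Phi0 Phi1 cPhi] := iso; have [cf _ _] := hf.
have c3t : continuous (fun st : R * R => 3 * st.2).
  by move=> st; apply: cvgM; [exact: cvg_cst | exact: cvg_snd].
have c3tB b : continuous (fun st : R * R => 3 * st.2 - b).
  by move=> st; apply: cvgB; [exact: c3t | exact: cvg_cst].
have cp : continuous (fun st : R * R => Ps st.1 i).
  by move=> st; apply: continuous_comp (cP st.1); exact: cvg_fst.
have csnd : continuous (@snd R R) by move=> st; exact: cvg_snd.
apply: (within_continuous_if (key := snd) (c := 1 / 3)) => //.
- exact: closed_unit_square.
- apply/continuous_subspaceT/continuous_lerp; [exact: c3t | | exact: cp].
  by move=> st; exact: cvg_cst.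
- apply: (within_continuous_if (key := snd) (c := 2 / 3)) => //.
  + by apply: closedI; [exact: closed_unit_square | exact: closed_snd_ge].
  + apply: (within_continuous_comp
      (u := fun st : R * R => (3 * st.2 - 1, Ps st.1 i)) _ _ cPhi).
      by apply: continuous_subspaceT => st; exact: cvg_pair (c3tB 1 st) (cp st).
    move=> st [[[Is /andP[t0 t1]] /= t13] /= t23]; split; last exact: diskP.
    by rewrite /I01 /=; apply/andP; split; lra.
  + apply/continuous_subspaceT/continuous_lerp; first exact: c3tB.
      by move=> st; apply: continuous_comp (cp st) (cf _).
    by move=> st; exact: cvg_cst.
  + move=> st _ /= ->.
    have -> : 3 * (2 / 3) - 1 = 1 :> R by lra.
    have -> : 3 * (2 / 3) - 2 = 0 :> R by lra.
    by rewrite Phi1 lerp0.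
- move=> st _ /= ->; rewrite ifT; last by lra.
  have -> : 3 * (1 / 3) - 1 = 0 :> R by lra.
  have -> : 3 * (1 / 3) = 1 :> R by lra.
  by rewrite lerp1 Phi0.
Qed.

Lemma beta_strand_geom_braid (P : 'I_n -> pt R) :
  beta_dom f P -> geom_braid (beta_strand P f Phi).
Proof.
move=> [oP neqP [_ disjP] [_ disjfP]]; have [homPhi Phi0 Phi1 _] := iso.
split.
- move=> i; apply: (within_continuous_comp (u := fun t : R => (0 : R, t)) _ _
    (beta_strand_family_continuous (Ps := fun=> P) (i := i) (fun=> cvg_cst _)
       (fun _ _ => odisk_cdisk (oP i)))).
    by apply: continuous_subspaceT => t; exact: cvg_pair (cvg_cst _) cvg_id.
  by move=> t It; split => //; rewrite /I01 /= lexx ler01.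
- move=> i t /andP[t0 t1]; rewrite /beta_strand.
  case: ifP => t13.
    by apply: odisk_lerp; [apply/andP; split; lra | exact: odisk_qpt | exact: oP].
  case: ifP => t23.
    by apply: homeoD_odisk (oP i); apply: homPhi; apply/andP; split; lra.
  by apply: odisk_lerp; [apply/andP; split; lra | exact: homeoD_odisk | exact: odisk_qpt].
- move=> i j t /andP[t0 t1] ij; rewrite /beta_strand.
  case: ifP => t13; first by apply: disjP => //; apply/andP; split; lra.
  case: ifP => t23.
    have homPhit : homeoD (Phi (3 * t - 1)) by apply: homPhi; apply/andP; split; lra.
    by move/(homeoD_inj homPhit); exact: neqP.
  rewrite lerpC [X in _ <> X]lerpC; apply: disjfP => //; apply/andP; split; lra.
- by move=> i; rewrite /beta_strand mulr0 ifT ?lerp0 //; lra.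
- move=> i; exists i; rewrite /beta_strand.
  have -> : (1 <= 1 / 3 :> R) = false by apply/negbTE; rewrite -ltNge; lra.
  have -> : (1 <= 2 / 3 :> R) = false by apply/negbTE; rewrite -ltNge; lra.
  have -> : 3 * 1 - 2 = 1 :> R by lra.
  exact: lerp1.
Qed.

Lemma beta_strand_path_equiv (Ps : R -> 'I_n -> pt R) :
  (forall i, continuous (fun s => Ps s i)) -> (forall s, I01 s -> beta_dom f (Ps s)) ->
  braid_equiv (beta_strand (Ps 0) f Phi) (beta_strand (Ps 1) f Phi).
Proof.
move=> cPs domPs; exists (fun s => beta_strand (Ps s) f Phi); split => //.
- by move=> s Is; apply: beta_strand_geom_braid; exact: domPs.
- move=> i; apply: beta_strand_family_continuous => // s Is.
  by case: (domPs s Is) => oP _ _ _; exact: odisk_cdisk.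
Qed.

End Strands.

Lemma in_beta_open (R : realType) (n : nat) (f : pt R -> pt R)
    (S : set (braidT R n)) : homeoD f ->
  config_open [set P | beta_dom f P /\ exists2 b, S b & in_beta P f b].
Proof.
move=> hf P [domP [b Sb [Phi [iso Pb]]]].
apply: filterS (beta_dom_open hf domP) => d sub P' PP'.
pose Ps s j := lerp s (P' j) (P j).
have domPs s : I01 s -> beta_dom f (Ps s) by move=> Is; apply: sub => i; exact: ball_lerp.
have cPs i : continuous (fun s => Ps s i).
  by apply: continuous_lerp => s; [exact: cvg_id | exact: cvg_cst | exact: cvg_cst].
have Ps0 : Ps 0 = P' by apply/funext => j; exact: lerp0.
have Ps1 : Ps 1 = P by apply/funext => j; exact: lerp1.
split; first by apply: sub.
exists b => //; exists Phi; split => //; apply: braid_equiv_trans Pb.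
by have := beta_strand_path_equiv hf iso cPs domPs; rewrite Ps0 Ps1.
Qed.

Section Measurability.
Variables (R : realType) (n : nat).

Lemma rat_point_near (x : pt R) (r : R) : 0 < r ->
  exists q : rat * rat, ball x r (ratr q.1, ratr q.2).
Proof.
move=> r0; have rat_near (y : R) : exists q : rat, ball y r (ratr q).
  have [q] : exists q : rat, ratr q \in `]y - r, y + r[ by apply: rat_in_itvoo; lra.
  rewrite in_itv /= => /andP[yq qy]; exists q.
  by rewrite -ball_normE /= ltr_norml; apply/andP; split; lra.
have [q1 xq1] := rat_near x.1; have [q2 xq2] := rat_near x.2.
by exists (q1, q2).
Qed.

Lemma measurable_config_ball (c : 'I_n -> pt R) (r : R) :
  measurable (config_ball c r : set (ptsn R n)).
Proof.
apply: sub_gen_smallest; exists (fun i => ball (c i) r); split => // i.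
rewrite (_ : ball (c i) r = ball (c i).1 r `*` ball (c i).2 r) //.
by apply: measurableX; exact: measurable_ball.
Qed.

(* An open set is the union of the rational boxes it contains. *)
Lemma config_open_measurable (F : set ('I_n -> pt R)) :
  config_open F -> measurable (F : set (ptsn R n)).
Proof.
move=> oF; pose box (k : {ffun 'I_n -> rat * rat} * rat) :=
  config_ball (fun i => (ratr (k.1 i).1, ratr (k.1 i).2) : pt R) (ratr k.2).
have -> : F = \bigcup_k (if pselect (box k `<=` F) then box k else set0).
  apply/seteqP; split => P; last first.
    by case=> k _; case: (pselect (box k `<=` F)) => [sub /sub|nsub []].
  move=> FP; have [d d0 sub] := near_radius_pos (oF P FP).
  have [r] : exists r : rat, ratr r \in `]0, d / 2[.
    by apply: rat_in_itvoo; rewrite divr_gt0.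
  rewrite in_itv /= => /andP[r0 rd].
  have [c Pc] := choice (fun i => rat_point_near (P i) r0).
  exists ([ffun i => c i], r) => //.
  case: (pselect (box ([ffun i => c i], r) `<=` F)) => [boxF|not_sub].
    by move=> i /=; rewrite ffunE; exact: ball_sym.
  apply: not_sub => P' PP'; apply: sub => i; have := PP' i; rewrite /= ffunE.
  by move/(ball_triangle (Pc i)); apply: le_ball; lra.
apply: countable_bigcupT_measurable; first exact: countableP.
move=> k; case: (pselect (box k `<=` F)) => boxF; last exact: measurable0.
exact: measurable_config_ball.
Qed.

End Measurability.

Theorem lemma2 (R : realType) (n : nat) (hn : (0 < n)%N) (phi : pt R -> pt R)
    (lam : 'I_n -> probability (pt R) R)
    (mu : {measure set (ptsn R n) -> \bar R}) :
  homeoD phi ->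
  (forall i, lam i (@cdisk R) = 1%E) ->
  (forall i (A : set (pt R)), measurable A -> lam i (phi @^-1` A) = lam i A) ->
  is_prod_measure lam mu ->
  coherent mu ->
  forall S : set (braidT R n),
    cmeasurable mu
      [set P : ptsn R n | beta_dom phi P /\ exists2 b, S b & in_beta P phi b].
Proof.
move=> hphi _ _ _ _ S.
exists [set P : ptsn R n | beta_dom phi P /\ exists2 b, S b & in_beta P phi b]; split.
  by apply: config_open_measurable; exact: in_beta_open.
by rewrite setDv setU0; exact: negligible_set0.
Qed.
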